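(* Let $H\in\mathbb{R}^{n\times d}$ have rank $h$, $\Sigma\in\mathbb{R}^{n\times n}$ symmetric positive definite, $\Gamma_0$ the empirical covariance of an initial ensemble, $C_0=H\Gamma_0H^\top$ and $C_{i+1}=\Sigma-\Sigma(C_i+\Sigma)^{-1}\Sigma$. Consider the generalized eigenvalue problem $C_i\tilde w=\tilde\delta\Sigma\tilde w$, whose eigenvectors do not depend on $i$, with eigenvalue $\tilde\delta_{\ell,i}$ along eigenvector $\tilde w_\ell$. Then $\tilde\delta_{\ell,0}=0$ implies $\tilde\delta_{\ell,i}=0$ for all $i\ge1$, and $\tilde\delta_{\ell,0}>0$ implies $\tilde\delta_{\ell,i}>0$ for all $i\ge1$. Let $r$ be the number of positive eigenvalues. There is a $\Sigma$-orthogonal basis $\{\tilde w_1,\dots,\tilde w_n\}$ of $\mathbb{R}^n$ of eigenvectors such that: (1) $\tilde w_1,\dots,\tilde w_r\in\mathsf{Ran}(\Sigma^{-1}H)$ have positive eigenvalues, labeled with $\tilde\delta_{1,1}\ge\dots\ge\tilde\delta_{r,1}>0$, and this ordering is preserved for all $i\ge1$; (2) if $r<h$, $\tilde w_{r+1},\dots,\tilde w_h\in\mathsf{Ran}(\Sigma^{-1}H)$ have eigenvalue zero; (3) if $h<n$, $\tilde w_{h+1},\dots,\tilde w_n\in\mathsf{Ker}(H^\top)$ have eigenvalue zero.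
   Context: Empirical covariance of $v_0^{(1)},\dots,v_0^{(J)}$: $\Gamma_0=\frac1{J-1}\sum_j(v_0^{(j)}-\bar v_0)(v_0^{(j)}-\bar v_0)^\top$, $\bar v_0=\frac1J\sum_jv_0^{(j)}$. $\Sigma$-orthogonal means $\tilde w_k^\top\Sigma\tilde w_l=0$ for $k\ne l$. *)

From mathcomp Require Import all_boot all_order all_algebra.
Set Implicit Arguments. Unset Strict Implicit. Unset Printing Implicit Defensive.
Import Order.TTheory GRing.Theory Num.Theory.
Local Open Scope ring_scope.

Section Defs.
Variable R : rcfType.

Definition ens_mean (d J : nat) (v : 'I_J -> 'cV[R]_d) : 'cV[R]_d :=
  (J%:R)^-1 *: \sum_(j < J) v j.

Definition emp_cov (d J : nat) (v : 'I_J -> 'cV[R]_d) : 'M[R]_d :=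
  ((J.-1)%:R)^-1 *:
    \sum_(j < J) ((v j - ens_mean v) *m (v j - ens_mean v)^T).

Fixpoint Cseq (n : nat) (Sigma C0 : 'M[R]_n) (i : nat) : 'M[R]_n :=
  match i with
  | 0 => C0
  | i'.+1 => Sigma - Sigma *m invmx (Cseq Sigma C0 i' + Sigma) *m Sigma
  end.

Definition spd (n : nat) (S : 'M[R]_n) : Prop :=
  S^T = S /\ forall x : 'cV[R]_n, x != 0 -> 0 < (x^T *m S *m x) 0 0.

Definition in_ran_SinvH (n d : nat) (Sigma : 'M[R]_n) (H : 'M[R]_(n, d))
  (x : 'cV[R]_n) : Prop :=
  exists y : 'cV[R]_d, x = invmx Sigma *m H *m y.

Definition in_ker_HT (n d : nat) (H : 'M[R]_(n, d)) (x : 'cV[R]_n) : Prop :=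
  H^T *m x = 0.

Definition gen_eig (n : nat) (C Sigma : 'M[R]_n) (w : 'cV[R]_n) (delta : R) : Prop :=
  C *m w = delta *: (Sigma *m w).
End Defs.

From mathcomp Require Import all_boot all_order all_algebra.
From mathcomp Require Import complex lra ring zify.
Set Implicit Arguments. Unset Strict Implicit. Unset Printing Implicit Defensive.
Import Order.TTheory GRing.Theory Num.Theory.
Local Open Scope ring_scope.

(* Let N := C_0 Sigma^-1.  As C_0 and Sigma are symmetric, N is self-adjoint for
   the inner product <u, w> := u Sigma w^T on row vectors, so every N-stable
   subspace has a Sigma-orthogonal basis of real eigenvectors: a complex
   eigenvector of a self-adjoint map has a real eigenvalue, and the
   Sigma-orthogonal complement of an eigenvector is again N-stable.  The row
   space of H^T Sigma^-1 (the transpose of Ran(Sigma^-1 H)) and the kernel of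
   H are N-stable and Sigma-orthogonal to each other; C_0 = H Gamma_0 H^T is
   positive semidefinite and vanishes on ker H, so all eigenvalues are
   nonnegative and those on ker H are zero.  Along a generalized eigenvector
   with eigenvalue t >= 0, C_i + Sigma acts as (1 + t) Sigma, hence C_(i+1)
   has eigenvalue 1 - (1 + t)^-1 = t / (1 + t); this map fixes 0, preserves
   positivity and is increasing, which gives the sign and order statements. *)

Section Forms.
Variable R : comPzRingType.

Lemma form_sym k (M : 'M[R]_k) (a b : 'rV_k) : M^T = M ->
  (a *m M *m b^T) 0 0 = (b *m M *m a^T) 0 0.
Proof.
move=> M_sym; have tr11 (X : 'M[R]_1) : X 0 0 = X^T 0 0 by rewrite mxE.
by rewrite tr11 !trmx_mul trmxK M_sym mulmxA.
Qed.
End Forms.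

Section RealEigenvector.
Variable R : rcfType.
Local Notation toC := (real_complex R).

Lemma map_Re_mul k (v : 'rV[R[i]]_k) (A : 'M[R]_k) :
  map_mx (@complex.Re R) (v *m map_mx toC A) = map_mx (@complex.Re R) v *m A.
Proof.
apply/rowP => j; rewrite !mxE.
rewrite (big_morph _ (raddfD (@complex.Re R : Rcomplex R -> R)) (raddf0 _)).
by apply: eq_bigr => i _; rewrite !mxE; case: (v 0 i) => x y /=; rewrite mulr0 subr0.
Qed.

Lemma map_Im_mul k (v : 'rV[R[i]]_k) (A : 'M[R]_k) :
  map_mx (@complex.Im R) (v *m map_mx toC A) = map_mx (@complex.Im R) v *m A.
Proof.
apply/rowP => j; rewrite !mxE.
rewrite (big_morph _ (raddfD (@complex.Im R : Rcomplex R -> R)) (raddf0 _)).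
by apply: eq_bigr => i _; rewrite !mxE; case: (v 0 i) => x y /=; rewrite mulr0 add0r.
Qed.

Lemma map_Re_scale k (z : R[i]) (v : 'rV[R[i]]_k) :
  map_mx (@complex.Re R) (z *: v) =
  complex.Re z *: map_mx (@complex.Re R) v - complex.Im z *: map_mx (@complex.Im R) v.
Proof. by apply/rowP => j; rewrite !mxE; case: z; case: (v 0 j). Qed.

Lemma map_Im_scale k (z : R[i]) (v : 'rV[R[i]]_k) :
  map_mx (@complex.Im R) (z *: v) =
  complex.Im z *: map_mx (@complex.Re R) v + complex.Re z *: map_mx (@complex.Im R) v.
Proof.
by apply/rowP => j; rewrite !mxE; case: z; case: (v 0 j) => a b c d /=; rewrite addrC.
Qed.

Lemma real_eigenvector k (A G : 'M[R]_k) : (0 < k)%N -> G^T = G ->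
  (A *m G)^T = A *m G -> (forall c : 'rV_k, c != 0 -> 0 < (c *m G *m c^T) 0 0) ->
  exists2 c : 'rV_k, c != 0 & exists x, c *m A = x *: c.
Proof.
move=> k_gt0 G_sym AG_sym G_pd.
pose form (a b : 'rV[R]_k) := (a *m G *m b^T) 0 0.
have formC a b : form a b = form b a by apply: form_sym.
have formA a b : form (a *m A) b = form (b *m A) a.
  by rewrite /form -!(mulmxA _ A) form_sym.
have [z /eigenvalueP [v v_eig v_neq0]] := Theorem7' (map_mx toC A) k_gt0.
set p := map_mx (@complex.Re R) v; set q := map_mx (@complex.Im R) v.
have pA : p *m A = complex.Re z *: p - complex.Im z *: q.
  by rewrite -map_Re_mul v_eig map_Re_scale.
have qA : q *m A = complex.Im z *: p + complex.Re z *: q.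
  by rewrite -map_Im_mul v_eig map_Im_scale.
have pq_neq0 : (p != 0) || (q != 0).
  apply: contraNT v_neq0; rewrite negb_or !negbK => /andP[/eqP p0 /eqP q0].
  apply/eqP/rowP => j; move/rowP/(_ j): p0; move/rowP/(_ j): q0.
  by rewrite !mxE; case: (v 0 j) => a b /= -> ->.
have form_gt0 : 0 < form p p + form q q.
  have form_ge0 c : 0 <= form c c.
    by have [->|/G_pd/ltW //] := eqVneq c 0; rewrite /form !mul0mx mxE.
  by move: (form_ge0 p) (form_ge0 q); case/orP: pq_neq0 => /G_pd; rewrite /form; lra.
have Im_z0 : complex.Im z = 0.
  have := formA p q; have := formC q p; rewrite pA qA /form.
  rewrite !(mulmxBl, mulmxDl) -!scalemxAl !mxE => pq_sym e.
  have : complex.Im z * (form p p + form q q) = 0.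
    by rewrite /form !mxE; nra.
  by move/eqP; rewrite mulf_eq0 (gt_eqF form_gt0) orbF => /eqP.
rewrite Im_z0 scale0r subr0 in pA; rewrite Im_z0 scale0r add0r in qA.
by case/orP: pq_neq0 => ?; [exists p | exists q] => //; exists (complex.Re z).
Qed.
End RealEigenvector.

Section PositiveDefinite.
Variables (R : numFieldType) (n : nat) (Sig : 'M[R]_n).
Hypothesis Sig_pd : forall u : 'rV_n, u != 0 -> 0 < (u *m Sig *m u^T) 0 0.

Lemma pd_form_neq0 (u : 'rV_n) : u != 0 -> (u *m Sig *m u^T) 0 0 != 0.
Proof. by move/Sig_pd/lt0r_neq0. Qed.

Lemma pd_unitmx : Sig \in unitmx.
Proof.
rewrite -row_free_unit -kermx_eq0; apply: contraT => ker_neq0.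
have /pd_form_neq0 : nz_row (kermx Sig) != 0 by rewrite nz_row_eq0.
by rewrite (sub_kermxP (nz_row_sub _)) mul0mx mxE eqxx.
Qed.

Lemma pd_orth_row_free m (M : 'M_(m, n)) : (forall k, row k M != 0) ->
  (forall k l, k != l -> (row k M *m Sig *m (row l M)^T) 0 0 = 0) -> row_free M.
Proof.
move=> M_neq0 M_orth; rewrite -kermx_eq0 -submx0; apply/rV_subP => c /sub_kermxP cM0.
rewrite submx0; apply/eqP/rowP => l; rewrite !mxE.
have : (c *m M *m Sig *m (row l M)^T) 0 0 = 0 by rewrite cM0 !mul0mx mxE.
rewrite (mulmx_sum_row c M) !mulmx_suml summxE (bigD1 l) //= big1 ?addr0.
  rewrite -!scalemxAl mxE => /eqP.
  by rewrite mulf_eq0 (negbTE (pd_form_neq0 (M_neq0 l))) orbF => /eqP.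
by move=> k kl; rewrite -!scalemxAl mxE M_orth ?mulr0.
Qed.
End PositiveDefinite.

Section SigmaEigenbasis.
Variables (R : rcfType) (n : nat) (Sig C : 'M[R]_n).
Hypotheses (Sig_sym : Sig^T = Sig) (C_sym : C^T = C).
Hypothesis Sig_pd : forall u : 'rV_n, u != 0 -> 0 < (u *m Sig *m u^T) 0 0.
Local Notation N := (C *m invmx Sig).

Definition rayleigh (u : 'rV_n) : R := (u *m C *m u^T) 0 0 / (u *m Sig *m u^T) 0 0.

Definition sig_eigvec (u : 'rV_n) : bool :=
  (u != 0) && (u *m C == rayleigh u *: (u *m Sig)).

Definition sig_orthogonal (us : seq 'rV_n) : Prop :=
  {in us &, forall u v, u != v -> (u *m Sig *m v^T) 0 0 = 0}.

Lemma rayleighE u x : u != 0 -> u *m C = x *: (u *m Sig) -> rayleigh u = x.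
Proof.
move=> u_neq0 uC; rewrite /rayleigh uC -scalemxAl mxE mulfK //.
exact: pd_form_neq0.
Qed.

Lemma sig_eigvecP u x : u != 0 -> u *m C = x *: (u *m Sig) -> sig_eigvec u.
Proof. by move=> u_neq0 uC; rewrite /sig_eigvec u_neq0 (rayleighE u_neq0 uC) uC eqxx. Qed.

Lemma stable_sig_eigvec m (S : 'M_(m, n)) : (0 < \rank S)%N -> stablemx S N ->
  exists2 u, (u <= S)%MS & sig_eigvec u.
Proof.
move=> S_gt0 S_st; set B := row_base S.
have B_st : stablemx B N by rewrite stablemx_row_base.
have B_free : row_free B := row_base_free S.
have BS : (B <= S)%MS by rewrite eq_row_base.
clearbody B; set A := B *m N *m pinvmx B.
have BA : B *m N = A *m B by rewrite mulmxKpV.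
have [|||c c_neq0 [x cA]] := @real_eigenvector _ _ A (B *m Sig *m B^T) S_gt0 _ _ _.
- by rewrite !trmx_mul trmxK Sig_sym mulmxA.
- rewrite !mulmxA -BA !mulmxA mulmxKV ?pd_unitmx //.
  by rewrite !trmx_mul trmxK C_sym mulmxA.
- move=> c c_neq0; rewrite !mulmxA -(mulmxA _ B^T) -trmx_mul.
  by apply: Sig_pd; rewrite mulmx_free_eq0.
exists (c *m B); first exact: submx_trans (submxMl _ _) BS.
apply: (@sig_eigvecP _ x); first by rewrite mulmx_free_eq0.
rewrite -[C](mulmxKV (pd_unitmx Sig_pd)) (mulmxA (c *m B)) -(mulmxA c) BA.
by rewrite mulmxA cA -!scalemxAl.
Qed.

Lemma sig_eigvec_col u : sig_eigvec u -> C *m u^T = rayleigh u *: (Sig *m u^T).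
Proof. by case/andP => _ /eqP uC; rewrite -C_sym -Sig_sym -!trmx_mul uC linearZ. Qed.

Lemma sig_orth_compl_stable m (S : 'M_(m, n)) (u : 'rV_n) :
  sig_eigvec u -> stablemx S N -> stablemx (S :&: kermx (Sig *m u^T))%MS N.
Proof.
move=> u_eig S_st; rewrite sub_capmx; apply/andP; split.
  exact: submx_trans (submxMr _ (capmxSl _ _)) S_st.
apply/sub_kermxP; rewrite -mulmxA (mulmxA N) mulmxKV ?pd_unitmx //.
by rewrite sig_eigvec_col // -scalemxAr (sub_kermxP (capmxSr _ _)) scaler0.
Qed.

Lemma sig_orth_compl_rank m (S : 'M_(m, n)) (u : 'rV_n) : (u <= S)%MS -> u != 0 ->
  \rank (S :&: kermx (Sig *m u^T))%MS = (\rank S).-1.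
Proof.
move=> uS u_neq0; set K := kermx (Sig *m u^T).
have uK : ~~ (u <= K)%MS.
  apply: contra (pd_form_neq0 Sig_pd u_neq0) => /sub_kermxP.
  by rewrite mulmxA => ->; rewrite mxE.
have rK : \rank K = n.-1.
  rewrite mxrank_ker; suff -> : \rank (Sig *m u^T) = 1%N by rewrite subn1.
  apply/eqP; rewrite eqn_leq rank_leq_col lt0n mxrank_eq0.
  by apply: contraNneq uK => Su0; apply/sub_kermxP; rewrite Su0 mulmx0.
have lt_rank : (\rank (S :&: K) < \rank S)%N.
  rewrite rank_ltmx // ltmxE capmxSl /=; apply: contra uK => SK.
  exact: submx_trans uS (submx_trans SK (capmxSr _ _)).
have := mxrank_sum_cap S K; have := rank_leq_col (S + K)%MS; rewrite rK; lia.
Qed.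

Lemma stable_sig_eigbasis k m (S : 'M_(m, n)) : \rank S = k -> stablemx S N ->
  exists us, [/\ size us = k, uniq us, all (fun u => u <= S)%MS us,
                 all sig_eigvec us & sig_orthogonal us].
Proof.
elim: k m S => [|k IH] m S rS S_st; first by exists [::].
have [u uS u_eig] : exists2 u, (u <= S)%MS & sig_eigvec u.
  by apply: stable_sig_eigvec; rewrite ?rS.
have u_neq0 : u != 0 by case/andP: u_eig.
set S' := (S :&: kermx (Sig *m u^T))%MS.
have [|us [size_us us_uniq us_S' us_eig us_orth]] :=
  IH _ S' _ (sig_orth_compl_stable u_eig S_st).
  by rewrite sig_orth_compl_rank // rS.
have us_u v : v \in us -> (v *m Sig *m u^T) 0 0 = 0.
  move=> v_us; have /sub_kermxP : (v <= kermx (Sig *m u^T))%MS.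
    by apply: submx_trans (capmxSr S _); apply: (allP us_S').
  by rewrite mulmxA => ->; rewrite mxE.
exists (u :: us); split => /=; rewrite ?size_us ?u_eig ?us_eig //.
- rewrite us_uniq andbT; apply: contraL (pd_form_neq0 Sig_pd u_neq0) => /us_u ->.
  by rewrite eqxx.
- rewrite uS; apply/allP => v /(allP us_S') vS'.
  exact: submx_trans vS' (capmxSl _ _).
- move=> v w; rewrite !inE => /predU1P[-> | v_us] /predU1P[-> | w_us].
  + by rewrite eqxx.
  + by move=> _; rewrite form_sym // us_u.
  + by move=> _; rewrite us_u.
  + exact: us_orth.
Qed.

Section PositiveSemidefinite.
Hypothesis C_psd : forall u : 'rV_n, 0 <= (u *m C *m u^T) 0 0.

Lemma rayleigh_ge0 u : 0 <= rayleigh u.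
Proof.
apply: divr_ge0 => //.
by have [->|/Sig_pd/ltW //] := eqVneq u 0; rewrite !mul0mx mxE.
Qed.

Lemma gen_eig_ge0 (w : 'cV_n) t : w != 0 -> gen_eig C Sig w t -> 0 <= t.
Proof.
move=> w_neq0 wt; have := C_psd w^T; rewrite trmxK -mulmxA wt -scalemxAr mxE mulmxA.
by rewrite pmulr_lge0 // -{2}[w]trmxK Sig_pd ?trmx_eq0.
Qed.
End PositiveSemidefinite.

End SigmaEigenbasis.

Section RiccatiEigenvalues.
Variable R : realFieldType.

Definition riccati_eig (t : R) : R := 1 - (1 + t)^-1.

Lemma riccati_eig0 : riccati_eig 0 = 0.
Proof. by rewrite /riccati_eig addr0 invr1 subrr. Qed.

Lemma riccati_eig_ge0 t : 0 <= t -> 0 <= riccati_eig t.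
Proof. by move=> t_ge0; rewrite subr_ge0 invf_le1; lra. Qed.

Lemma riccati_eig_gt0 t : 0 < t -> 0 < riccati_eig t.
Proof. by move=> t_gt0; rewrite subr_gt0 invf_lt1; lra. Qed.

Lemma riccati_eig_le s t : 0 <= s -> s <= t -> riccati_eig s <= riccati_eig t.
Proof. by move=> s_ge0 st; rewrite lerD2l lerN2 lef_pV2 ?posrE; lra. Qed.

Lemma iter_riccati_eig0 i : iter i riccati_eig 0 = 0.
Proof. by elim: i => //= i ->; apply: riccati_eig0. Qed.

Lemma iter_riccati_eig_ge0 i t : 0 <= t -> 0 <= iter i riccati_eig t.
Proof. by move=> t_ge0; elim: i => //= i; apply: riccati_eig_ge0. Qed.

Lemma iter_riccati_eig_gt0 i t : 0 < t -> 0 < iter i riccati_eig t.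
Proof. by move=> t_gt0; elim: i => //= i; apply: riccati_eig_gt0. Qed.

Lemma iter_riccati_eig_le i s t : 0 <= s -> s <= t ->
  iter i riccati_eig s <= iter i riccati_eig t.
Proof.
move=> s_ge0 st; elim: i => //= i; apply: riccati_eig_le.
exact: iter_riccati_eig_ge0.
Qed.
End RiccatiEigenvalues.
Arguments riccati_eig {R} t.

Section RiccatiIteration.
Variables (R : rcfType) (n : nat) (Sig : 'M[R]_n).
Hypothesis Sig_unit : Sig \in unitmx.

Lemma riccati_gen_eig (Ci : 'M[R]_n) w t : (Ci + Sig) \in unitmx -> 0 <= t ->
  gen_eig Ci Sig w t ->
  gen_eig (Sig - Sig *m invmx (Ci + Sig) *m Sig) Sig w (riccati_eig t).
Proof.
rewrite /gen_eig => CS_unit t_ge0 wt.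
have CSw : (Ci + Sig) *m w = (1 + t) *: (Sig *m w).
  by rewrite mulmxDl wt scalerDl scale1r addrC.
have invCS : invmx (Ci + Sig) *m (Sig *m w) = (1 + t)^-1 *: w.
  have t1_neq0 : 1 + t != 0 by apply/lt0r_neq0; lra.
  have := mulKmx CS_unit w; rewrite CSw -scalemxAr => CSK.
  by rewrite -{2}CSK scalerA mulVf // scale1r.
by rewrite mulmxBl -!mulmxA invCS -scalemxAr scalerBl scale1r.
Qed.

Lemma gen_eigbasis_unitmx (Ci : 'M[R]_n) (W : 'I_n -> 'cV_n) (d : 'I_n -> R) :
  row_free (\matrix_(k < n) (W k)^T) -> (forall l, 0 <= d l) ->
  (forall l, gen_eig Ci Sig (W l) (d l)) -> (Ci + Sig) \in unitmx.
Proof.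
move=> W_free d_ge0 W_eig; set P := (\matrix_(k < n) (W k)^T)^T.
have colP A l i : (A *m P) i l = (A *m W l) i 0.
  by rewrite !mxE; apply: eq_bigr => k _; rewrite !mxE.
set D := diag_mx (\row_l (1 + d l)).
have CSP : (Ci + Sig) *m P = Sig *m P *m D.
  apply/matrixP => i l; rewrite mul_mx_diag mxE !colP mulmxDl W_eig !mxE; ring.
have D_unit : D \in unitmx.
  rewrite unitmxE det_diag unitfE; apply/prodf_neq0 => l _; rewrite mxE.
  by apply/lt0r_neq0; have := d_ge0 l; lra.
have : (Ci + Sig) *m P \in unitmx.
  by rewrite CSP !unitmx_mul Sig_unit unitmx_tr -row_free_unit W_free.
by rewrite unitmx_mul => /andP[].
Qed.

Lemma Cseq_gen_eig (C0 : 'M[R]_n) (W : 'I_n -> 'cV_n) (d : 'I_n -> R) :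
  row_free (\matrix_(k < n) (W k)^T) -> (forall l, 0 <= d l) ->
  (forall l, gen_eig C0 Sig (W l) (d l)) ->
  forall i w t, 0 <= t -> gen_eig C0 Sig w t ->
  gen_eig (Cseq Sig C0 i) Sig w (iter i riccati_eig t).
Proof.
move=> W_free d_ge0 W_eig; elim=> [//|i IH] w t t_ge0 wt /=.
apply: riccati_gen_eig; [|exact: iter_riccati_eig_ge0|exact: IH].
apply: (gen_eigbasis_unitmx W_free (fun l => iter_riccati_eig_ge0 i (d_ge0 l))).
by move=> l; apply: IH.
Qed.
End RiccatiIteration.

Section EmpiricalCovariance.
Variables (R : rcfType) (d J : nat) (v : 'I_J -> 'cV[R]_d).

Lemma emp_cov_sym : (emp_cov v)^T = emp_cov v.
Proof.
rewrite /emp_cov linearZ /= linear_sum /=; congr (_ *: _).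
by apply: eq_bigr => j _; rewrite trmx_mul trmxK.
Qed.

Lemma emp_cov_psd (z : 'rV_d) : 0 <= (z *m emp_cov v *m z^T) 0 0.
Proof.
rewrite /emp_cov -scalemxAr -scalemxAl mxE mulr_ge0 ?invr_ge0 ?ler0n //.
rewrite mulmx_sumr mulmx_suml summxE sumr_ge0 // => j _; set y := v j - _.
have -> : z *m (y *m y^T) *m z^T = (z *m y) *m (z *m y)^T by rewrite trmx_mul !mulmxA.
by rewrite mxE big_ord1 [X in _ * X]mxE -expr2 sqr_ge0.
Qed.
End EmpiricalCovariance.

Lemma nonincreasing_pos_prefix (R : realDomainType) (f : nat -> R) n :
  (forall k l, (k <= l < n)%N -> f l <= f k) -> (forall l, 0 <= f l) ->
  exists2 r, (r <= n)%N & forall l, (l < n)%N -> (l < r)%N = (0 < f l).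
Proof.
move=> f_noninc f_ge0; set r := find (fun l => f l == 0) (iota 0 n).
exists r => [|l ln]; first by rewrite -[X in (_ <= X)%N](size_iota 0 n) find_size.
have [lr|rl] := ltnP l r.
  by have := before_find 0 lr; rewrite nth_iota ?add0n // lt_def f_ge0 => ->.
have rn : (r < n)%N by apply: leq_ltn_trans rl ln.
have /eqP fr0 : f r == 0.
  have /(nth_find 0) : has (fun l => f l == 0) (iota 0 n) by rewrite has_find size_iota.
  by rewrite nth_iota ?add0n.
by apply/esym/negbTE; rewrite -leNgt -fr0 f_noninc ?rl.
Qed.

Lemma spd_rV (R : rcfType) n (S : 'M[R]_n) : spd S ->
  S^T = S /\ forall u : 'rV_n, u != 0 -> 0 < (u *m S *m u^T) 0 0.
Proof. by case=> S_sym S_pd; split=> // u; move: (S_pd u^T); rewrite trmxK trmx_eq0. Qed.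

Section EnsembleKalmanBasis.
Variables (R : rcfType) (n d J : nat) (H : 'M[R]_(n, d)) (Sig : 'M[R]_n).
Variable v : 'I_J -> 'cV[R]_d.
Hypothesis Sig_sym : Sig^T = Sig.
Hypothesis Sig_pd : forall u : 'rV_n, u != 0 -> 0 < (u *m Sig *m u^T) 0 0.
Local Notation C0 := (H *m emp_cov v *m H^T).
Local Notation N := (C0 *m invmx Sig).
Local Notation HtSinv := (H^T *m invmx Sig).
Local Notation rayleigh := (rayleigh Sig C0).
Local Notation sig_eigvec := (sig_eigvec Sig C0).

Lemma C0_sym : C0^T = C0.
Proof. by rewrite !trmx_mul trmxK emp_cov_sym mulmxA. Qed.

Lemma C0_psd (u : 'rV_n) : 0 <= (u *m C0 *m u^T) 0 0.
Proof.
have -> : u *m C0 *m u^T = (u *m H) *m emp_cov v *m (u *m H)^T.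
  by rewrite trmx_mul !mulmxA.
exact: emp_cov_psd.
Qed.

Lemma stable_HtSinv : stablemx HtSinv N.
Proof.
have -> : HtSinv *m N = (HtSinv *m H *m emp_cov v) *m HtSinv by rewrite !mulmxA.
exact: submxMl.
Qed.

Lemma stable_kerH : stablemx (kermx H) N.
Proof. by rewrite !mulmxA mulmx_ker !mul0mx sub0mx. Qed.

Lemma HtSinv_kerH_orth (u w : 'rV_n) : (u <= HtSinv)%MS -> w *m H = 0 ->
  (u *m Sig *m w^T) 0 0 = 0.
Proof.
move=> /submxP[y ->] wH; rewrite -!mulmxA mulKmx ?pd_unitmx //.
by rewrite -trmx_mul wH trmx0 mulmx0 mxE.
Qed.

Lemma rayleigh_kerH u : u *m H = 0 -> rayleigh u = 0.
Proof. by move=> uH; rewrite /rayleigh !mulmxA uH !mul0mx mxE mul0r. Qed.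

Lemma ordered_eigseq : exists L : seq 'rV_n,
  [/\ size L = n, uniq L, all sig_eigvec L, sig_orthogonal Sig L &
   [/\ sorted >=%R (map rayleigh (take (\rank H) L)),
        all (fun u => u <= HtSinv)%MS (take (\rank H) L) &
        all (fun u => u *m H == 0) (drop (\rank H) L)]].
Proof.
have Sig_unit := pd_unitmx Sig_pd.
have rank_HtSinv : \rank HtSinv = \rank H.
  by rewrite mxrankMfree ?mxrank_tr // row_free_unit unitmx_inv.
have [us1 [size1 uniq1 ran1 eig1 orth1]] :=
  stable_sig_eigbasis Sig_sym C0_sym Sig_pd rank_HtSinv stable_HtSinv.
have [us2 [size2 uniq2 ker2 eig2 orth2]] :=
  stable_sig_eigbasis Sig_sym C0_sym Sig_pd (mxrank_ker H) stable_kerH.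
have {}ker2 u : u \in us2 -> u *m H = 0 by move/(allP ker2)/sub_kermxP.
set s1 := sort (relpre rayleigh >=%R) us1.
have mem1 : s1 =i us1 by apply: mem_sort.
have size_s1 : size s1 = \rank H by rewrite size_sort.
have cross u w : u \in s1 -> w \in us2 -> (u *m Sig *m w^T) 0 0 = 0.
  by rewrite mem1 => /(allP ran1) uS /ker2; apply: HtSinv_kerH_orth.
exists (s1 ++ us2); rewrite take_size_cat ?drop_size_cat //; split.
- by rewrite size_cat size_s1 size2 subnKC // rank_leq_row.
- rewrite cat_uniq sort_uniq uniq1 uniq2 andbT /=.
  apply/hasPn => u u2; apply/negP => u1.
  have /andP[u_neq0 _] : sig_eigvec u by apply: (allP eig2).
  by have := pd_form_neq0 Sig_pd u_neq0; rewrite cross ?eqxx.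
- by rewrite all_cat all_sort eig1.
- move=> u w; rewrite !mem_cat => /orP[u1|u2] /orP[w1|w2].
  + by apply: orth1; rewrite -mem1.
  + by move=> _; apply: cross.
  + by move=> _; rewrite form_sym // cross.
  + exact: orth2.
split.
- by rewrite sorted_map sort_sorted // => u w; apply: le_total.
- by rewrite all_sort.
- by apply/allP => u /ker2 ->.
Qed.

Lemma ordered_eigbasis : exists (w : 'I_n -> 'cV_n) (ev : nat -> R),
  [/\ row_free (\matrix_(k < n) (w k)^T),
      forall k l : 'I_n, k != l -> ((w k)^T *m Sig *m w l) 0 0 = 0,
      forall l : 'I_n, gen_eig C0 Sig (w l) (ev l),
      forall l, 0 <= ev l &
  [/\ forall k l, (k <= l < n)%N -> ev l <= ev k,
      forall l : 'I_n, (l < \rank H)%N -> in_ran_SinvH Sig H (w l) &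
      forall l : 'I_n, (\rank H <= l)%N -> in_ker_HT H (w l) /\ ev l = 0]].
Proof.
have [L [size_L uniq_L eig_L orth_L [sorted_L ran_L ker_L]]] := ordered_eigseq.
have h_le_n : (\rank H <= n)%N by rewrite rank_leq_row.
have size_take : size (take (\rank H) L) = \rank H by rewrite size_takel ?size_L.
have eig_nth (l : 'I_n) : sig_eigvec (nth 0 L l) by rewrite (allP eig_L) ?mem_nth ?size_L.
have orth_nth (k l : 'I_n) : k != l -> (nth 0 L k *m Sig *m (nth 0 L l)^T) 0 0 = 0.
  by move=> kl; rewrite orth_L ?mem_nth ?nth_uniq ?size_L.
have ker_nth l : (\rank H <= l)%N -> nth 0 L l *m H = 0.
  move=> hl; have [ln|/(nth_default 0) ->] := ltnP l (size L); last exact: mul0mx.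
  apply/eqP/(allP ker_L); rewrite -[l](subnKC hl) -nth_drop mem_nth // size_drop.
  by rewrite ltn_subRL subnKC.
exists (fun l => (nth 0 L l)^T), (fun l => rayleigh (nth 0 L l)); split.
- apply: (@pd_orth_row_free _ _ _ Sig_pd) => [k|k l kl]; rewrite !rowK !trmxK.
    by case/andP: (eig_nth k).
  exact: orth_nth.
- by move=> k l kl; rewrite trmxK orth_nth.
- by move=> l; rewrite /gen_eig (sig_eigvec_col Sig_sym C0_sym (eig_nth l)).
- by move=> l; apply: rayleigh_ge0 Sig_pd C0_psd _.
split.
- move=> k l /andP[kl _]; have [lh|hl] := ltnP l (\rank H); last first.
    by rewrite rayleigh_kerH ?ker_nth // (rayleigh_ge0 Sig_pd C0_psd _).
  have kh := leq_ltn_trans kl lh.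
  have := sorted_leq_nth ge_trans lexx 0 sorted_L.
  rewrite size_map size_take => /(_ k l kh lh kl).
  by rewrite !(nth_map 0) ?size_take // !nth_take.
- move=> l lh; have /(allP ran_L) /submxP[y ->] : nth 0 L l \in take (\rank H) L.
    by rewrite -(nth_take _ lh) mem_nth ?size_take.
  by exists y^T; rewrite !trmx_mul trmx_inv Sig_sym trmxK.
- move=> l hl; split; first by rewrite /in_ker_HT -trmx_mul ker_nth ?trmx0.
  exact: rayleigh_kerH (ker_nth _ hl).
Qed.
End EnsembleKalmanBasis.

Unset Implicit Arguments.
Set Strict Implicit.

Theorem proposition4p3 (R : rcfType) (n d h J : nat)
  (H : 'M[R]_(n, d)) (Sigma : 'M[R]_n) (v : 'I_J -> 'cV[R]_d) :
  (1 < J)%N ->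
  \rank H = h ->
  spd Sigma ->
  let C := Cseq Sigma (H *m emp_cov v *m H^T) in
  (* eigenvectors of C_0 stay eigenvectors of every C_i, with sign of
     the eigenvalue (zero / positive) preserved *)
  (forall (w : 'cV[R]_n) (delta0 : R), w != 0 -> gen_eig (C 0%N) Sigma w delta0 ->
     forall i : nat, exists deltai : R,
       gen_eig (C i) Sigma w deltai /\
       (delta0 = 0 -> deltai = 0) /\ (0 < delta0 -> 0 < deltai)) /\
  (* Sigma-orthogonal eigenbasis with the stated structure *)
  (exists (w : 'I_n -> 'cV[R]_n) (delta : nat -> 'I_n -> R) (r : nat),
     [/\ row_free (\matrix_(k < n) (w k)^T),
         (forall k l : 'I_n, k != l -> ((w k)^T *m Sigma *m w l) 0 0 = 0),
         (forall (i : nat) (l : 'I_n), gen_eig (C i) Sigma (w l) (delta i l)),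
         (r <= h)%N &
         [/\
         (* (1) *)
         (forall l : 'I_n, (l < r)%N ->
            in_ran_SinvH Sigma H (w l) /\ forall i : nat, 0 < delta i l) /\
         (forall (i : nat) (k l : 'I_n), (1 <= i)%N -> (k <= l)%N -> (l < r)%N ->
            delta i l <= delta i k),
         (* (2) *)
         (forall l : 'I_n, (r <= l)%N -> (l < h)%N ->
            in_ran_SinvH Sigma H (w l) /\ forall i : nat, delta i l = 0) &
         (* (3) *)
         (forall l : 'I_n, (h <= l)%N ->
            in_ker_HT H (w l) /\ forall i : nat, delta i l = 0)]]).
Proof.
move=> _ <- /spd_rV[Sig_sym Sig_pd] C.
have [w [ev [w_free w_orth w_eig ev_ge0 [ev_noninc w_ran w_ker]]]] :=
  ordered_eigbasis H v Sig_sym Sig_pd.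
have C_eig := Cseq_gen_eig (pd_unitmx Sig_pd) w_free (fun l => ev_ge0 l) w_eig.
split.
  move=> w0 t w0_neq0 w0_eig i; exists (iter i riccati_eig t); split.
    by apply: C_eig (gen_eig_ge0 Sig_pd (C0_psd H v) w0_neq0 w0_eig) w0_eig.
  by split=> [->|/iter_riccati_eig_gt0 //]; apply: iter_riccati_eig0.
have [r r_le_n r_pos] := nonincreasing_pos_prefix ev_noninc ev_ge0.
have r_le_h : (r <= \rank H)%N.
  have [hn|nh] := ltnP (\rank H) n; last exact: leq_trans r_le_n nh.
  by rewrite leqNgt r_pos // (w_ker (Ordinal hn) (leqnn _)).2 ltxx.
exists w, (fun i l => iter i riccati_eig (ev l)), r; split=> //.
- by move=> i l; apply: C_eig.
- split; first split.
  + move=> l lr; split=> [|i]; first exact/w_ran/(leq_trans lr r_le_h).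
    by apply: iter_riccati_eig_gt0; rewrite -r_pos.
  + move=> i k l _ kl _; apply: iter_riccati_eig_le => //.
    by apply: ev_noninc; rewrite kl ltn_ord.
  + move=> l rl lh; split=> [|i]; first exact: w_ran.
    suff -> : ev l = 0 by apply: iter_riccati_eig0.
    by apply/eqP; rewrite eq_le ev_ge0 andbT leNgt -r_pos // -leqNgt.
  + by move=> l hl; have [? ->] := w_ker l hl; split=> // i; apply: iter_riccati_eig0.
Qed.
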